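(* Let $0<\varepsilon\leq 1/2$ be a constant and $0<\alpha\le 1$. For a subset $S\subseteq\mathbb{Z}_p$ chosen uniformly at random among the subsets of $\mathbb{Z}_p$ of size $p^{\varepsilon}$, its generic $\alpha$-complexity satisfies $$\mathcal{C}_\alpha(S)>\frac{\alpha|S|}{\ln p}$$ with probability at least $1-1/p$, for all sufficiently large primes $p$.
   Context: $\mathbb{Z}_p$ is the field of residues modulo a prime $p$. For $L\subseteq\mathbb{Z}_p^2$, $I(L)=\{x\in\mathbb{Z}_p\mid \exists (a,b),(a',b')\in L,\ (a,b)\neq(a',b'),\ ax+b=a'x+b'\}$. For $S\subseteq\mathbb{Z}_p$ and $0<\alpha\leq1$, the generic $\alpha$-complexity $\mathcal{C}_\alpha(S)$ is the smallest cardinality of a set $L\subseteq\mathbb{Z}_p^2$ with $|S\cap I(L)|\geq\alpha|S|$. *)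

From HB Require Import structures.
From mathcomp Require Import all_boot all_order all_algebra.
From mathcomp Require Import all_classical all_reals all_analysis.
Set Implicit Arguments. Unset Strict Implicit. Unset Printing Implicit Defensive.
Import Order.TTheory GRing.Theory Num.Theory.
Local Open Scope ring_scope.

Definition Iset (p : nat) (L : {set 'F_p * 'F_p}) : {set 'F_p} :=
  [set x | [exists l1 in L, exists l2 in L,
             (l1 != l2) && (l1.1 * x + l1.2 == l2.1 * x + l2.2)]].

Definition alpha_ok (R : realType) (p : nat) (alpha : R) (S : {set 'F_p})
  (L : {set 'F_p * 'F_p}) : bool :=
  alpha * (#|S|%:R) <= (#|S :&: Iset L|%:R).

(* generic alpha-complexity: smallest |L| among admissible L
   (the set of admissible L is nonempty, e.g. L = all of Z_p^2). *)
Definition C_alpha (R : realType) (p : nat) (alpha : R) (S : {set 'F_p}) : nat :=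
  \big[minn/#|[set: 'F_p * 'F_p]|]_(L : {set 'F_p * 'F_p} | alpha_ok alpha S L) #|L|.

From HB Require Import structures.
From mathcomp Require Import all_boot all_order all_algebra.
From mathcomp Require Import reals sequences exp unstable.
From mathcomp Require Import zify ring lra.
Set Implicit Arguments. Unset Strict Implicit. Unset Printing Implicit Defensive.
Import Order.TTheory GRing.Theory Num.Theory.
Local Open Scope ring_scope.

(* If C_alpha(S) <= B, some set of at most B lines meets S in at least
   j = alpha |S| of its at most B^2 pairwise crossings.  Such an S of size k
   therefore contains a j-subset of the crossings of some B-tuple of lines, so
   there are at most p^(2B) C(B^2, j) C(p - j, k - j) of them.  For k = p^eps,
   j ~ alpha k and B ~ alpha k / ln p this is at most C(p, k) / p: compared
   with C(p, k) it carries the factor (B^2 / (p - j))^j <= (ln p)^(-2j), which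
   beats p^(1 + 2B) 2^k = exp(O(k)). *)

Lemma card_supsets (T : finType) (A : {set T}) k :
  (#|[set S : {set T} | (#|S| == k) && (A \subset S)]| <= 'C(#|T| - #|A|, k - #|A|))%N.
Proof.
set D := [set S | _].
have inj : {in D &, injective (fun S => S :\: A)}.
  move=> S1 S2; rewrite !inE => /andP[_ /setIidPr AS1] /andP[_ /setIidPr AS2] eqD.
  by rewrite -(setID S1 A) -(setID S2 A) AS1 AS2 eqD.
have -> : (#|T| - #|A| = #|~: A|)%N by rewrite [#|~: A|]cardsCs setCK.
rewrite -(card_in_imset inj) -cards_draws.
apply: subset_leq_card; apply/subsetP => _ /imsetP[S + ->].
rewrite !inE => /andP[/eqP <- AS].
by rewrite cardsDS // eqxx andbT setDE subsetIr.
Qed.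

Lemma subset_of_card (T : finType) (A : {set T}) j :
  (j <= #|A|)%N -> exists2 B : {set T}, B \subset A & #|B| = j.
Proof.
case/card_geqP => s [uniq_s <- sA]; exists [set x in s].
  by apply/subsetP => x; rewrite inE => /sA.
by rewrite cardsE; apply/card_uniqP.
Qed.

Lemma ffun_cover (T : finType) (x0 : T) (A : {set T}) n :
  (#|A| <= n)%N -> exists f : {ffun 'I_n -> T}, A \subset f @: 'I_n.
Proof.
move=> An; exists [ffun i : 'I_n => nth x0 (enum A) i].
apply/subsetP => x xA; have ltxn : (index x (enum A) < n)%N.
  by rewrite (leq_trans _ An) // cardE index_mem mem_enum.
by apply/imsetP; exists (Ordinal ltxn); rewrite ?ffunE ?nth_index ?mem_enum.
Qed.

Definition crossing (K : fieldType) (l1 l2 : K * K) : K := (l2.2 - l1.2) / (l1.1 - l2.1).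

Lemma crossingE (K : fieldType) (l1 l2 : K * K) (x : K) :
  l1 != l2 -> l1.1 * x + l1.2 = l2.1 * x + l2.2 -> crossing l1 l2 = x.
Proof.
case: l1 l2 => [a b] [c d] /= neq meet.
have ac : a - c != 0.
  apply: contraNneq neq => /eqP; rewrite subr_eq0 => /eqP eq_ac.
  by move: meet; rewrite eq_ac => /addrI ->.
have -> : d = a * x + b - c * x by rewrite meet; ring.
by rewrite /crossing /= [_ - b](_ : _ = x * (a - c)) ?mulfK //; ring.
Qed.

Definition crossings (K : finFieldType) (L : {set K * K}) : {set K} :=
  [set crossing l1 l2 | l1 in L, l2 in L].

Lemma card_crossings (K : finFieldType) (L : {set K * K}) :
  (#|crossings L| <= #|L| * #|L|)%N.
Proof. by rewrite /crossings curry_imset2X (leq_trans (leq_imset_card _ _)) ?cardsX. Qed.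

Lemma crossingsS (K : finFieldType) (L1 L2 : {set K * K}) :
  L1 \subset L2 -> crossings L1 \subset crossings L2.
Proof. by move=> sL; apply: imset2S. Qed.

Lemma Iset_sub_crossings p (L : {set 'F_p * 'F_p}) : Iset L \subset crossings L.
Proof.
apply/subsetP => x; rewrite inE => /existsP[l1 /andP[l1L /existsP[l2 /andP[l2L]]]].
by case/andP=> neq /eqP meet; apply/imset2P; exists l1 l2; rewrite ?(crossingE neq meet).
Qed.

Lemma Iset_setT p : Iset [set: 'F_p * 'F_p] = [set: 'F_p].
Proof.
apply/setP => x; rewrite !inE; apply/existsP; exists (0, 0); rewrite inE /=.
by apply/existsP; exists (1, - x); rewrite inE /= mul0r add0r mul1r subrr.
Qed.

Lemma C_alpha_witness (R : realType) p (alpha : R) (S : {set 'F_p}) :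
  alpha <= 1 -> exists2 L, alpha_ok alpha S L & #|L| = C_alpha alpha S.
Proof.
move=> alpha_le1; rewrite /C_alpha.
apply: (big_ind (fun n => exists2 L, alpha_ok alpha S L & #|L| = n)).
- by exists [set: 'F_p * 'F_p]; rewrite // /alpha_ok Iset_setT setIT ler_piMl.
- by move=> m n [L1 ? <-] [L2 ? <-]; case: leqP => _; [exists L1 | exists L2].
- by move=> L ?; exists L.
Qed.

Definition line_covered p (k j B : nat) : {set {set 'F_p}} :=
  [set S : {set 'F_p} | (#|S| == k) &&
     [exists L : {set 'F_p * 'F_p}, (#|L| <= B)%N && (j <= #|S :&: Iset L|)%N]].

Lemma C_alpha_line_covered (R : realType) p (alpha : R) (S : {set 'F_p}) k j B :
  alpha <= 1 -> #|S| = k -> (C_alpha alpha S <= B)%N -> j%:R <= alpha * k%:R ->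
  S \in line_covered p k j B.
Proof.
move=> alpha_le1 <- CB jS; have [L SL eqL] := C_alpha_witness S alpha_le1.
rewrite inE eqxx; apply/existsP; exists L; rewrite eqL CB -(ler_nat R).
exact: le_trans SL.
Qed.

Lemma card_line_covered p k j B : prime p ->
  (#|line_covered p k j B| <= (p * p) ^ B * ('C(B * B, j) * 'C(p - j, k - j)))%N.
Proof.
move=> p_pr; pose X (f : {ffun 'I_B -> 'F_p * 'F_p}) := crossings (f @: 'I_B).
pose supsets (T : {set 'F_p}) := [set S : {set 'F_p} | (#|S| == k) && (T \subset S)].
have cover : line_covered p k j B \subset
    \bigcup_(f : {ffun 'I_B -> 'F_p * 'F_p})
      \bigcup_(T in [set T : {set 'F_p} | T \subset X f & #|T| == j]) supsets T.
  apply/subsetP => S; rewrite inE => /andP[/eqP kS /existsP[L /andP[LB jSL]]].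
  have [f Lf] := ffun_cover (0, 0) LB.
  have [T TSL <-] := subset_of_card jSL.
  apply/bigcupP; exists f => //; apply/bigcupP; exists T; last first.
    by rewrite inE kS eqxx (subset_trans TSL) ?subsetIl.
  rewrite inE eqxx andbT (subset_trans TSL) // (subset_trans (subsetIr _ _)) //.
  exact: subset_trans (Iset_sub_crossings L) (crossingsS Lf).
apply: (leq_trans (subset_leq_card cover)); apply: (leq_trans (card_big_setU _ _ _)).
have -> : ((p * p) ^ B = #|{ffun 'I_B -> 'F_p * 'F_p}|)%N.
  by rewrite card_ffun card_prod card_Fp // card_ord.
rewrite -sum_nat_const; apply: leq_sum => f _.
apply: (leq_trans (card_big_setU _ _ _)).
apply: (@leq_trans
  (\sum_(T in [set T : {set 'F_p} | T \subset X f & #|T| == j]) 'C(p - j, k - j))).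
  apply: leq_sum => T; rewrite inE => /andP[_ /eqP <-].
  by have := card_supsets T k; rewrite card_Fp.
rewrite sum_nat_const cards_draws leq_mul2r leq_bin2l ?orbT //.
have fB : (#|f @: 'I_B| <= B)%N by rewrite (leq_trans (leq_imset_card _ _)) ?card_ord.
exact: leq_trans (card_crossings _) (leq_mul fB fB).
Qed.

Section BinomialEstimates.
Local Open Scope nat_scope.

Lemma mul_bin_sub n k j : j <= k <= n ->
  'C(n - j, k - j) * 'C(n, j) = 'C(n, k) * 'C(k, j).
Proof.
case/andP=> jk kn; have jn := leq_trans jk kn.
have facts_gt0 : 0 < j`! * (k - j)`! * (n - k)`! by rewrite !muln_gt0 !fact_gt0.
apply/eqP; rewrite -(eqn_pmul2r facts_gt0); apply/eqP.
have nj_kj : n - j - (k - j) = n - k by lia.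
have := bin_fact (leq_sub2r j kn); rewrite nj_kj => fact_nj.
rewrite [LHS](_ : _ = 'C(n, j) * (j`! * ('C(n - j, k - j) * ((k - j)`! * (n - k)`!))));
  last by ring.
rewrite [RHS](_ : _ = 'C(n, k) * (('C(k, j) * (j`! * (k - j)`!)) * (n - k)`!)); last by ring.
by rewrite fact_nj bin_fact // bin_fact // bin_fact.
Qed.

Lemma ffact_leq_expn n j : n ^_ j <= n ^ j.
Proof.
rewrite ffact_prod -[in n ^ j](card_ord j) -prod_nat_const.
by apply: leq_prod => i _; apply: leq_subr.
Qed.

Lemma expn_subn_leq_ffact n j : (n - j) ^ j <= n ^_ j.
Proof.
rewrite ffact_prod -[in (n - j) ^ j](card_ord j) -prod_nat_const.
by apply: leq_prod => i _; rewrite card_ord leq_sub2l // ltnW.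
Qed.

Lemma bin_leq_exp2 k j : 'C(k, j) <= 2 ^ k.
Proof.
rewrite -[in 'C(k, j)](card_ord k) -card_draws.
rewrite -[in 2 ^ k](card_ord k) -cardsT -card_powerset.
by apply: subset_leq_card; apply/subsetP => A _; rewrite powersetE subsetT.
Qed.

Lemma bin_mul_expn_leq t n j : 'C(t, j) * (n - j) ^ j <= t ^ j * 'C(n, j).
Proof.
rewrite -(leq_pmul2r (fact_gt0 j)) mulnAC bin_ffact -mulnA bin_ffact.
exact: leq_mul (ffact_leq_expn t j) (expn_subn_leq_ffact n j).
Qed.

Lemma mul_bin_sub_leq n k j m t : j <= k <= n -> j < n ->
  n * m * 2 ^ k * t ^ j <= (n - j) ^ j ->
  n * (m * ('C(t, j) * 'C(n - j, k - j))) <= 'C(n, k).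
Proof.
move=> jkn jn small.
have pos : 0 < 'C(n, j) * (n - j) ^ j.
  by rewrite muln_gt0 bin_gt0 ltnW // expn_gt0 subn_gt0 jn.
rewrite -(leq_pmul2r pos).
rewrite [leqLHS](_ : _ = n * m * ('C(t, j) * (n - j) ^ j) * ('C(n - j, k - j) * 'C(n, j)));
  last by ring.
rewrite mul_bin_sub //.
apply: (@leq_trans (n * m * (t ^ j * 'C(n, j)) * ('C(n, k) * 2 ^ k))).
  apply: leq_mul; first exact: leq_mul (leqnn _) (bin_mul_expn_leq t n j).
  exact: leq_mul (leqnn _) (bin_leq_exp2 k j).
rewrite [leqLHS](_ : _ = n * m * 2 ^ k * t ^ j * ('C(n, k) * 'C(n, j))); last by ring.
rewrite [leqRHS](_ : _ = (n - j) ^ j * ('C(n, k) * 'C(n, j))); last by ring.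
by rewrite leq_mul.
Qed.

End BinomialEstimates.

Section Estimates.
Variable R : realType.
Implicit Types (r c eps alpha : R) (B k j : nat).

Lemma powR_ge_2lnD1 r eps : 0 < r -> 0 < eps -> 8 <= eps ^+ 2 * ln r ->
  2 * ln r + 1 <= r `^ eps.
Proof.
move=> r_gt0 eps_gt0; rewrite expr2 => large.
have ln_ge0 : 0 <= ln r by nra.
have -> : r `^ eps = expR (eps * ln r / 2) ^+ 2.
  by rewrite -expRM_natl /powR gt_eqF //; congr expR; field.
apply: le_trans (_ : (1 + eps * ln r / 2) ^+ 2 <= _); first by nra.
by rewrite lerXn2r ?nnegrE ?expR_ge1Dx ?(le_trans _ (expR_ge1Dx _)) //; nra.
Qed.

Lemma powR_sqr_le r eps : 1 <= r -> eps <= 1 / 2 -> (r `^ eps) ^+ 2 <= r.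
Proof.
move=> r_ge1 eps_le; rewrite -powR_mulrn ?powR_ge0 // -powRrM.
by apply: ler1_powR => //; lra.
Qed.

Lemma le_expr_of_ln r c alpha B k j : 0 < r -> 0 < c -> c <= r -> 0 < alpha ->
  ln r <= k%:R -> B%:R * ln r <= alpha * k%:R -> alpha * k%:R < j.+1%:R ->
  2 * alpha + ln 2 + 2 <= alpha * ln c ->
  r * (r * r) ^+ B * 2 ^+ k <= c ^+ j.
Proof.
move=> r_gt0 c_gt0 cr alpha_gt0 lnr_le B_lnr j_gt lnc_large.
have rr_gt0 : 0 < r * r by rewrite mulr_gt0.
have rrB_gt0 : 0 < (r * r) ^+ B by rewrite exprn_gt0.
have pow2_gt0 : 0 < 2 ^+ k :> R by rewrite exprn_gt0.
have cj_gt0 : 0 < c ^+ j by rewrite exprn_gt0.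
rewrite -ler_ln ?posrE ?mulr_gt0 // lnM ?posrE ?mulr_gt0 // lnM ?posrE //.
rewrite lnXn // lnXn // lnXn // lnM ?posrE //.
rewrite -[_ *+ B]mulr_natr -[_ *+ k]mulr_natr -[_ *+ j]mulr_natr.
have ln2_gt0 : 0 < ln (2 : R) by rewrite ln_gt0 ?ltr1n.
have lc_gt0 : 0 < ln c.
  by rewrite -(pmulr_rgt0 _ alpha_gt0) (lt_le_trans _ lnc_large) //; lra.
have lc_le : ln c <= ln r by rewrite ler_ln ?posrE.
have j_lnc : alpha * k%:R * ln c <= j.+1%:R * ln c by rewrite ler_pM2r // ltW.
have k_lnc : k%:R * (2 * alpha + ln 2 + 2) <= k%:R * (alpha * ln c) by rewrite ler_wpM2l.
rewrite -natr1 in j_lnc; lra.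
Qed.

Lemma asymptotic_estimate eps alpha :
  0 < eps -> eps <= 1 / 2 -> 0 < alpha -> alpha <= 1 ->
  exists M, forall r k j B, 1 <= r -> M <= ln r ->
    k%:R <= r `^ eps < k.+1%:R -> j%:R <= alpha * k%:R < j.+1%:R ->
    B%:R <= alpha * k%:R / ln r ->
    [/\ (j <= k)%N, 2 * k%:R <= r &
        r * (r * r) ^+ B * 2 ^+ k * (B%:R * B%:R) ^+ j <= (r - j%:R) ^+ j].
Proof.
move=> eps_gt0 eps_le alpha_gt0 alpha_le1.
have ln2_gt0 : 0 < ln (2 : R) by rewrite ln_gt0 ?ltr1n.
pose M1 := (2 * alpha + ln 2 + 2) / alpha.
have M1_ge2 : 2 <= M1 by rewrite /M1 ler_pdivlMr //; lra.
have alpha_M1 : alpha * M1 = 2 * alpha + ln 2 + 2 by rewrite /M1 mulrC divfK ?gt_eqF.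
have expM1_ge : M1 + 1 <= expR M1 by rewrite addrC expR_ge1Dx.
have eps8_gt0 : 0 < 8 / eps ^+ 2 by rewrite divr_gt0 ?exprn_gt0.
exists (expR M1 + 8 / eps ^+ 2).
move=> r k j B r_ge1 M_le /andP[k_le k_lt] /andP[j_le j_lt] B_le.
have r_gt0 : 0 < r by lra.
have lnr_ge : expR M1 <= ln r by lra.
have lnr_gt0 : 0 < ln r by lra.
have eps_lnr : 8 <= eps ^+ 2 * ln r.
  by rewrite -ler_pdivrMl ?exprn_gt0 //; lra.
have k_gt : 2 * ln r < k%:R by have := powR_ge_2lnD1 r_gt0 eps_gt0 eps_lnr; lra.
have kk_le : k%:R * k%:R <= r.
  apply: le_trans (powR_sqr_le r_ge1 eps_le); rewrite expr2.
  by apply: ler_pM; rewrite ?ler0n.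
have jk : (j <= k)%N by rewrite -(ler_nat R); nra.
have k_half : 2 * k%:R <= r by nra.
have B_lnr : B%:R * ln r <= alpha * k%:R by rewrite -ler_pdivlMr.
(* Chosen so that B^2 c <= r / 2 (as B ln r <= k <= sqrt r) while ln c >= M1. *)
pose c := ln r ^+ 2 / 2.
have c_ge : ln r <= c by rewrite /c expr2; nra.
have c_le : c <= r.
  have := expR_ge1Dxn 1 (ltW lnr_gt0); rewrite lnK ?posrE //= /c.
  by have -> : (2`!)%:R = 2 :> R by []; lra.
have M1_le : M1 <= ln c.
  by rewrite -[M1]expRK ler_ln ?posrE ?expR_gt0 //; lra.
have budget : r * (r * r) ^+ B * 2 ^+ k <= c ^+ j.
  have c_gt0 := lt_le_trans lnr_gt0 c_ge.
  apply: (le_expr_of_ln r_gt0 c_gt0 c_le alpha_gt0 _ B_lnr j_lt); first lra.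
  by rewrite -alpha_M1 ler_pM2l.
have Bc_le : B%:R * B%:R * c <= r - j%:R.
  have Blnr_ge0 : 0 <= B%:R * ln r by rewrite mulr_ge0 ?ler0n ?ltW.
  have Blnr_le : B%:R * ln r <= k%:R by nra.
  have := ler_pM Blnr_ge0 Blnr_ge0 Blnr_le Blnr_le.
  have : (j%:R : R) <= k%:R by rewrite ler_nat.
  by rewrite /c; nra.
split=> //.
have BBj_ge0 : 0 <= (B%:R * B%:R) ^+ j :> R by rewrite exprn_ge0 ?mulr_ge0.
apply: le_trans (ler_wpM2r BBj_ge0 budget) _.
have Bc_ge0 : 0 <= B%:R * B%:R * c by rewrite mulr_ge0 ?mulr_ge0 //; lra.
by rewrite -exprMn mulrC lerXn2r // nnegrE (le_trans Bc_ge0).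
Qed.
End Estimates.

Lemma card_line_covered_small p k j B : prime p -> (j <= k)%N -> (2 * k <= p)%N ->
  (p * (p * p) ^ B * 2 ^ k * (B * B) ^ j <= (p - j) ^ j)%N ->
  (p * #|line_covered p k j B| <= 'C(p, k))%N.
Proof.
move=> p_pr jk kp small; have p_gt0 := prime_gt0 p_pr.
apply: leq_trans (mul_bin_sub_leq _ _ small); last by lia.
  by rewrite leq_mul2l card_line_covered ?orbT.
by rewrite jk; lia.
Qed.

Lemma onem_invn_mul_le (R : realType) (n N G : nat) : (0 < n)%N -> (G <= N)%N ->
  (n * (N - G) <= N)%N -> (1 - n%:R^-1) * N%:R <= G%:R :> R.
Proof.
move=> n_gt0 GN; rewrite -(ler_nat R) natrM natrB // => small.
have : N%:R - G%:R <= N%:R / n%:R :> R by rewrite ler_pdivlMr ?ltr0n // mulrC.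
by rewrite mulrBl mul1r mulrC; lra.
Qed.

Theorem theorem3 (R : realType) (eps alpha : R) :
  0 < eps <= 1 / 2 -> 0 < alpha <= 1 ->
  exists P0 : nat, forall p : nat, prime p -> (P0 <= p)%N ->
    (1 - (p%:R : R)^-1) *
      (#|[set S : {set 'F_p} | #|S| == Num.truncn ((p%:R : R) `^ eps)]|%:R)
    <=
    (#|[set S : {set 'F_p} | (#|S| == Num.truncn ((p%:R : R) `^ eps))
          && (alpha * (#|S|%:R) / ln (p%:R : R) < (C_alpha alpha S)%:R)]|%:R).
Proof.
move=> /andP[eps_gt0 eps_le] /andP[alpha_gt0 alpha_le1].
have [M estimate] := asymptotic_estimate eps_gt0 eps_le alpha_gt0 alpha_le1.
exists (Num.truncn (expR M)).+1 => p p_pr; rewrite truncn_lt_nat ?expR_ge0 // => expM_lt.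
set r := (p%:R : R); set k := Num.truncn (r `^ eps).
set j := Num.truncn (alpha * k%:R); set B := Num.truncn (alpha * k%:R / ln r).
have r_ge1 : 1 <= r by rewrite ler1n prime_gt0.
have M_le : M <= ln r by rewrite -ler_expR lnK ?posrE ?ltW // (lt_le_trans ltr01).
have ak_ge0 : 0 <= alpha * k%:R by rewrite mulr_ge0 ?ler0n ?ltW.
have B_le : B%:R <= alpha * k%:R / ln r by rewrite truncn_le divr_ge0 ?ln_ge0.
have [jk k_half est] := estimate r k j B r_ge1 M_le
  (truncn_itv (powR_ge0 _ _)) (truncn_itv ak_ge0) B_le.
have k_le_p : (2 * k <= p)%N by rewrite -(ler_nat R) natrM.
have est_nat : (p * (p * p) ^ B * 2 ^ k * (B * B) ^ j <= (p - j) ^ j)%N.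
  by rewrite -(ler_nat R) !natrM !natrX natrB ?natrM //; lia.
set N := [set S | _]; set G := [set S | _].
have GN : G \subset N by apply/subsetP => S; rewrite !inE => /andP[].
have bad : N :\: G \subset line_covered p k j B.
  apply/subsetP => S /setDP[SN SG]; rewrite !inE in SN SG; move/eqP: SN => kS.
  rewrite kS eqxx /= -leNgt in SG.
  apply: (C_alpha_line_covered (alpha := alpha)) => //; last by rewrite truncn_le.
  by rewrite truncn_ge_nat ?divr_ge0 ?ln_ge0.
apply: onem_invn_mul_le (prime_gt0 p_pr) (subset_leq_card GN) _.
rewrite -cardsDS // card_draws card_Fp //.
apply: leq_trans (card_line_covered_small p_pr jk k_le_p est_nat).
by rewrite leq_mul2l subset_leq_card ?orbT.
Qed.
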